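(* Consider the following random process producing a new population (clade) of finite surreal forms from an existing finite population $\mathcal{C}$ of finite surreal forms. To create each member of the new clade independently: draw a number of parents $n_p \sim \mathrm{Poisson}(\lambda)$ with $\lambda>0$; select $n_p$ surreal forms from $\mathcal{C}$, each chosen independently with probability proportional to $w_{g(x)}$, where $(w_k)_{k\ge0}$ is a non-negative weighting depending only on the generation; sort the chosen parents into an ordered list $P$; choose a split point $s\in\{0,\dots,n_p\}$ from a split distribution $D_s(n_p)$; and set $x=\{X_L\mid X_R\}$ with $X_L=\{P[1],\dots,P[s]\}$ and $X_R=\{P[s+1],\dots,P[n_p]\}$ (each empty when the index range is empty). Let $g_k$ denote the proportion of members of $\mathcal{C}$ with generation $k$, let $Z=\sum_{i\ge0} g_i w_i$ (assumed positive), $z_k=g_k w_k/Z$ and $Z_k=\sum_{i=0}^k z_i$. Then for every $k\ge0$, the generation distribution of the new clade has CDF $$G'_{k+1} = e^{\lambda(Z_k-1)},$$ i.e. a member $x'$ of the new clade satisfies $\Pr[g(x')\le k+1]=e^{\lambda(Z_k-1)}$.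
   Context: A (short) surreal form is $x=\{X_L\mid X_R\}$ where $X_L,X_R$ are finite (possibly empty) sets of previously constructed surreal forms such that no element of $X_R$ is $\le$ any element of $X_L$; the base form is $\bar 0=\{\emptyset\mid\emptyset\}$. The elements of $X_L\cup X_R$ are the parents of $x$. The generation is defined by $g(\bar 0)=0$ and $g(x)=1+\max_{p\in X_L\cup X_R} g(p)$. *)

From Stdlib Require Import Reals List Permutation Arith.
From Coquelicot Require Import Coquelicot.
Import ListNotations.
Open Scope R_scope.

(** Finite (pre-)forms {X_L | X_R}: finite sets of parents are represented by
    finite lists (duplicates are harmless for every notion used here). *)
Inductive form : Type := Form : list form -> list form -> form.

Fixpoint gen (x : form) : nat :=
  match x with
  | Form L R =>
      Nat.max (fold_right Nat.max 0%nat (map (fun p => S (gen p)) L))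
              (fold_right Nat.max 0%nat (map (fun p => S (gen p)) R))
  end.

Definition lsum {A : Type} (f : A -> R) (l : list A) : R :=
  fold_right Rplus 0 (map f l).

Definition lprod {A : Type} (f : A -> R) (l : list A) : R :=
  fold_right Rmult 1 (map f l).

(** All lists of length n with entries in {0,...,N-1} (ordered draws of indices). *)
Fixpoint tuples (N n : nat) : list (list nat) :=
  match n with
  | O => [[]]
  | S m => flat_map (fun i => map (cons i) (tuples N m)) (seq 0 N)
  end.

Definition poisson (lam : R) (n : nat) : R := exp (- lam) * lam ^ n / INR (fact n).

(** Default form (the base form 0bar), used only for out-of-range nth. *)
Definition zero_form : form := Form [] [].

Definition Wtot (w : nat -> R) (C : list form) : R := lsum (fun c => w (gen c)) C.

Definition sel (w : nat -> R) (C : list form) (i : nat) : R :=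
  w (gen (nth i C zero_form)) / Wtot w C.

Definition new_form (srt : list form -> list form) (C : list form)
  (t : list nat) (s : nat) : form :=
  let P := srt (map (fun i => nth i C zero_form) t) in
  Form (firstn s P) (skipn s P).

(** Probability, in the new clade, of the event g(x') <= m:
    sum over n_p ~ Poisson(lam), ordered parent draws, and split s ~ D n_p. *)
Definition term_gen_le (lam : R) (w : nat -> R) (D : nat -> nat -> R)
  (srt : list form -> list form) (C : list form) (m : nat) (n : nat) : R :=
  poisson lam n *
  lsum (fun t => lprod (sel w C) t *
                 sum_f_R0 (fun s => D n s *
                    (if Nat.leb (gen (new_form srt C t s)) m then 1 else 0)) n)
       (tuples (length C) n).

Definition gprop (C : list form) (k : nat) : R :=
  INR (count_occ Nat.eq_dec (map gen C) k) / INR (length C).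

Definition maxgen (C : list form) : nat := fold_right Nat.max 0%nat (map gen C).

(** Z = sum_{i>=0} g_i w_i  (the terms vanish for i > maxgen C). *)
Definition Zsum (w : nat -> R) (C : list form) : R :=
  sum_f_R0 (fun i => gprop C i * w i) (maxgen C).

Definition zk (w : nat -> R) (C : list form) (k : nat) : R :=
  gprop C k * w k / Zsum w C.

Definition Zk (w : nat -> R) (C : list form) (k : nat) : R :=
  sum_f_R0 (zk w C) k.

(** A new form has generation at most k+1 exactly when all of its parents have
    generation at most k; neither the sorting of the parents nor the split point
    matters.  Given n_p = n, the n parents are independent draws, each of
    generation at most k with probability Z_k, so the event has probability
    Z_k^n.  Averaging over n ~ Poisson(lam) gives the probability generating
    function of the Poisson law, exp (lam (Z_k - 1)). *)

From Stdlib Require Import Reals List Permutation Arith.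
From Coquelicot Require Import Coquelicot.
From Stdlib Require Import Lia Lra.
Import ListNotations.
Open Scope R_scope.

Lemma lsum_nil {A : Type} (f : A -> R) : lsum f [] = 0.
Proof. reflexivity. Qed.

Lemma lsum_cons {A : Type} (f : A -> R) a l : lsum f (a :: l) = f a + lsum f l.
Proof. reflexivity. Qed.

Lemma lsum_app {A : Type} (f : A -> R) l1 l2 :
  lsum f (l1 ++ l2) = lsum f l1 + lsum f l2.
Proof.
  induction l1 as [|a l1 IH]; cbn [app]; [rewrite lsum_nil; ring|].
  rewrite !lsum_cons, IH; ring.
Qed.

Lemma lsum_ext_in {A : Type} (f g : A -> R) l :
  (forall x, In x l -> f x = g x) -> lsum f l = lsum g l.
Proof.
  induction l as [|a l IH]; intros Hfg; [reflexivity|].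
  rewrite !lsum_cons, Hfg, IH; [reflexivity | |left; reflexivity].
  intros x Hx; apply Hfg; right; exact Hx.
Qed.

Lemma lsum_scal {A : Type} (f : A -> R) c l :
  lsum (fun x => c * f x) l = c * lsum f l.
Proof.
  induction l as [|a l IH]; [rewrite !lsum_nil; ring|].
  rewrite !lsum_cons, IH; ring.
Qed.

Lemma lsum_nth {A : Type} (h : A -> R) (l : list A) (d : A) :
  lsum (fun i => h (nth i l d)) (seq 0 (length l)) = lsum h l.
Proof.
  induction l as [|a l IH]; [reflexivity|].
  simpl length; rewrite <- cons_seq, <- seq_shift, lsum_cons, lsum_cons, <- IH.
  unfold lsum; rewrite map_map; reflexivity.
Qed.

Lemma lprod_cons {A : Type} (f : A -> R) a l : lprod f (a :: l) = f a * lprod f l.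
Proof. reflexivity. Qed.

Lemma lprod_mult {A : Type} (f g : A -> R) l :
  lprod f l * lprod g l = lprod (fun x => f x * g x) l.
Proof.
  induction l as [|a l IH]; [unfold lprod; simpl; ring|].
  rewrite !lprod_cons, <- IH; ring.
Qed.

Lemma lprod_forallb {A : Type} (p : A -> bool) l :
  (if forallb p l then 1 else 0) = lprod (fun x => if p x then 1 else 0) l.
Proof.
  induction l as [|a l IH]; [reflexivity|].
  rewrite lprod_cons, <- IH; simpl.
  destruct (p a), (forallb p l); simpl; ring.
Qed.

Lemma lsum_lprod_tuples (g : nat -> R) N n :
  lsum (lprod g) (tuples N n) = lsum g (seq 0 N) ^ n.
Proof.
  induction n as [|n IH]; [unfold lsum, lprod; simpl; ring|].
  change (tuples N (S n)) with (flat_map (fun i => map (cons i) (tuples N n)) (seq 0 N)).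
  change (lsum g (seq 0 N) ^ S n) with (lsum g (seq 0 N) * lsum g (seq 0 N) ^ n).
  rewrite <- IH; clear IH; induction (seq 0 N) as [|i l IHl]; cbn [flat_map];
    [rewrite !lsum_nil; ring|].
  rewrite lsum_app, IHl, lsum_cons.
  unfold lsum at 1; rewrite map_map.
  change (fun x => lprod g (i :: x)) with (fun x => g i * lprod g x).
  fold (lsum (fun x => g i * lprod g x) (tuples N n)).
  rewrite lsum_scal; ring.
Qed.

Lemma sum_f_R0_lsum {A : Type} (f : nat -> A -> R) l K :
  sum_f_R0 (fun j => lsum (f j) l) K = lsum (fun x => sum_f_R0 (fun j => f j x) K) l.
Proof.
  induction l as [|a l IH].
  - induction K as [|K IHK]; simpl; [reflexivity|].
    rewrite IHK, !lsum_nil; ring.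
  - rewrite lsum_cons, <- IH, <- sum_plus.
    apply sum_eq; intros; apply lsum_cons.
Qed.

Lemma sum_f_R0_kronecker (f : nat -> R) g K :
  sum_f_R0 (fun j => (if Nat.eq_dec g j then 1 else 0) * f j) K =
  (if Nat.leb g K then f g else 0).
Proof.
  induction K as [|K IH]; simpl.
  - destruct (Nat.eq_dec g 0) as [->|Hg]; simpl; [ring|].
    destruct g; [lia|simpl; ring].
  - rewrite IH.
    destruct (Nat.eq_dec g (S K)) as [->|Hg]; cbn iota.
    + rewrite (proj2 (Nat.leb_gt _ _)), (proj2 (Nat.leb_le _ _)) by lia; ring.
    + destruct (Nat.leb_spec g K), (Nat.leb_spec g (S K)); try lia; ring.
Qed.

Lemma INR_count_occ_gen (C : list form) j :
  INR (count_occ Nat.eq_dec (map gen C) j) =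
  lsum (fun c => if Nat.eq_dec (gen c) j then 1 else 0) C.
Proof.
  induction C as [|c C IH]; [reflexivity|].
  rewrite lsum_cons, <- IH; simpl.
  destruct (Nat.eq_dec (gen c) j); [rewrite S_INR|]; ring.
Qed.

Lemma max_succ_gen_le (l : list form) k :
  (fold_right Nat.max 0%nat (map (fun p => S (gen p)) l) <= S k)%nat <->
  (forall p, In p l -> (gen p <= k)%nat).
Proof.
  induction l as [|a l IH]; cbn [map fold_right In].
  - split; [tauto | lia].
  - rewrite Nat.max_lub_iff, IH; split.
    + intros [Ha Hl] p [<-|Hp]; [lia | auto].
    + intros H; split; [apply le_n_S|]; auto.
Qed.

Lemma gen_Form_le L R k :
  (gen (Form L R) <= S k)%nat <-> (forall p, In p (L ++ R) -> (gen p <= k)%nat).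
Proof.
  simpl gen; rewrite Nat.max_lub_iff, !max_succ_gen_le.
  setoid_rewrite in_app_iff; firstorder.
Qed.

Lemma leb_gen_new_form (srt : list form -> list form) C t s k :
  (forall l, Permutation (srt l) l) ->
  Nat.leb (gen (new_form srt C t s)) (S k) =
  forallb (fun i => Nat.leb (gen (nth i C zero_form)) k) t.
Proof.
  intros Hsrt; apply Bool.eq_iff_eq_true.
  rewrite Nat.leb_le, forallb_forall; unfold new_form.
  rewrite gen_Form_le, firstn_skipn; split.
  - intros H i Hi; apply Nat.leb_le, H.
    apply (Permutation_in _ (Permutation_sym (Hsrt _))).
    apply (in_map (fun j => nth j C zero_form)), Hi.
  - intros H p Hp.
    apply (Permutation_in _ (Hsrt _)), in_map_iff in Hp.
    destruct Hp as [i [<- Hi]]; apply Nat.leb_le; auto.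
Qed.

Lemma le_maxgen (C : list form) c : In c C -> (gen c <= maxgen C)%nat.
Proof.
  unfold maxgen; induction C as [|a C IH]; simpl; [tauto|].
  intros [<-|H]; [lia | specialize (IH H); lia].
Qed.

Section WeightedGenerations.

Variables (w : nat -> R) (C : list form).

Definition weight_le (K : nat) : R :=
  lsum (fun c => if Nat.leb (gen c) K then w (gen c) else 0) C.

Lemma sum_gprop_weight K :
  sum_f_R0 (fun j => gprop C j * w j) K = weight_le K / INR (length C).
Proof.
  unfold gprop, Rdiv.
  rewrite (sum_eq _ (fun j => INR (count_occ Nat.eq_dec (map gen C) j) * w j * / INR (length C)))
    by (intros; ring).
  rewrite <- scal_sum, Rmult_comm; f_equal.
  rewrite (sum_eq _ (fun j => lsum (fun c => (if Nat.eq_dec (gen c) j then 1 else 0) * w j) C)).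
  - rewrite sum_f_R0_lsum; apply lsum_ext_in; intros c _.
    apply sum_f_R0_kronecker.
  - intros j _; rewrite INR_count_occ_gen, Rmult_comm, <- lsum_scal.
    apply lsum_ext_in; intros; ring.
Qed.

Lemma weight_le_maxgen : weight_le (maxgen C) = Wtot w C.
Proof.
  apply lsum_ext_in; intros c Hc.
  rewrite (proj2 (Nat.leb_le _ _)) by (apply le_maxgen, Hc); reflexivity.
Qed.

Hypothesis C_nonempty : (0 < length C)%nat.
Hypothesis Zsum_pos : 0 < Zsum w C.

Lemma Zk_weight_fraction k : Zk w C k = weight_le k / Wtot w C.
Proof.
  assert (HN : 0 < INR (length C)) by (apply lt_0_INR, C_nonempty).
  assert (HZ : Zsum w C = Wtot w C / INR (length C))
    by (unfold Zsum; rewrite sum_gprop_weight, weight_le_maxgen; reflexivity).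
  assert (HW : 0 < Wtot w C).
  { replace (Wtot w C) with (Zsum w C * INR (length C)) by (rewrite HZ; field; lra).
    apply Rmult_lt_0_compat; assumption. }
  unfold Zk, zk, Rdiv.
  rewrite <- scal_sum, sum_gprop_weight, HZ.
  field; lra.
Qed.

End WeightedGenerations.

Lemma is_series_poisson_pgf (lam q : R) :
  is_series (fun n => poisson lam n * q ^ n) (exp (lam * (q - 1))).
Proof.
  assert (Hterm : forall n, / INR (fact n) * (lam * q) ^ n * exp (- lam) = poisson lam n * q ^ n)
    by (intro n; unfold poisson, Rdiv; rewrite Rpow_mult_distr; ring).
  replace (exp (lam * (q - 1))) with (exp (lam * q) * exp (- lam))
    by (rewrite <- exp_plus; f_equal; ring).
  apply (is_series_ext _ _ _ Hterm), is_series_scal_r, is_pseries_R, is_exp_Reals.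
Qed.

Definition draw_gen_le (w : nat -> R) (C : list form) (k : nat) : R :=
  lsum (fun i => sel w C i * (if Nat.leb (gen (nth i C zero_form)) k then 1 else 0))
       (seq 0 (length C)).

Lemma term_gen_le_succ lam w D srt C k n :
  (forall n, sum_f_R0 (D n) n = 1) ->
  (forall l, Permutation (srt l) l) ->
  term_gen_le lam w D srt C (S k) n = poisson lam n * draw_gen_le w C k ^ n.
Proof.
  intros HD Hsrt; unfold term_gen_le, draw_gen_le; f_equal.
  rewrite <- lsum_lprod_tuples; apply lsum_ext_in; intros t _.
  rewrite (sum_eq _ (fun s => D n s *
             lprod (fun i => if Nat.leb (gen (nth i C zero_form)) k then 1 else 0) t))
    by (intros s _; rewrite leb_gen_new_form, lprod_forallb by exact Hsrt; reflexivity).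
  rewrite <- scal_sum, HD, Rmult_1_r; apply lprod_mult.
Qed.

Lemma draw_gen_le_Zk w C k :
  (0 < length C)%nat -> 0 < Zsum w C -> draw_gen_le w C k = Zk w C k.
Proof.
  intros HC HZ; rewrite Zk_weight_fraction by assumption.
  unfold draw_gen_le, sel, weight_le, Rdiv; rewrite Rmult_comm, <- lsum_scal.
  rewrite <- (lsum_nth _ C zero_form); apply lsum_ext_in; intros i _.
  destruct (Nat.leb _ k); ring.
Qed.

Theorem theorem1 (lam : R) (w : nat -> R) (D : nat -> nat -> R)
  (srt : list form -> list form) (C : list form) :
  0 < lam ->
  (forall i, 0 <= w i) ->
  (0 < length C)%nat ->
  0 < Zsum w C ->
  (forall n s, (s <= n)%nat -> 0 <= D n s) ->
  (forall n, sum_f_R0 (D n) n = 1) ->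
  (forall l, Permutation (srt l) l) ->
  forall k : nat,
    is_series (term_gen_le lam w D srt C (S k)) (exp (lam * (Zk w C k - 1))).
Proof.
  intros _ _ HC HZ _ HD Hsrt k.
  rewrite <- (draw_gen_le_Zk w C k HC HZ).
  apply (is_series_ext _ _ _ (fun n => eq_sym (term_gen_le_succ lam w D srt C k n HD Hsrt))).
  apply is_series_poisson_pgf.
Qed.
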